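(* Let $(X,d)$ be a compact metric space and $F:X\to 2^X$ a continuous, onto set-valued map. Then $F$ has the shadowing property if and only if the set-valued map $F_{inv}$ on $(\mathrm{Orb}_{inv}(X),\rho)$ has the shadowing property.
   Context: $X$ has diameter $1$; $2^X$ is the family of nonempty compact subsets of $X$. $F$ is upper semicontinuous if for every $x$ and open $U\supset F(x)$ there is a neighborhood $V$ of $x$ with $F(y)\subset U$ for $y\in V$; lower semicontinuous if for every $x$ and open $U$ with $F(x)\cap U\ne\emptyset$ there is a neighborhood $V$ of $x$ with $F(y)\cap U\neq\emptyset$ for $y\in V$; continuous if both. $F$ is onto if every $y$ lies in some $F(x)$. $\mathrm{Orb}_{inv}(X)=\{(x_0,x_1,\dots)\in X^{\mathbb N}: x_n\in F(x_{n+1})\ \forall n\}$ with metric $\rho((x_n),(y_n))=\sum_{n\ge0}d(x_n,y_n)/2^{n+1}$; $F_{inv}:\mathrm{Orb}_{inv}(X)\to 2^{\mathrm{Orb}_{inv}(X)}$, $F_{inv}((x_0,x_1,\dots))=\{(y,x_0,x_1,\dots): y\in F(x_0)\}$. For a set-valued map $G$ on a metric space $(Z,e)$: a $\delta$-pseudo-orbit is $\{z_n\}_{n\ge0}$ with $e(z_{n+1},G(z_n))<\delta$ for all $n$; a $G$-orbit is $(w_n)$ with $w_{n+1}\in G(w_n)$; $G$ has the shadowing property if for every $\varepsilon>0$ there is $\delta>0$ such that every $\delta$-pseudo-orbit $\{z_n\}$ admits a $G$-orbit $(w_n)$ with $e(z_n,w_n)<\varepsilon$ for all $n$. *)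

From Stdlib Require Import Reals List.
From Coquelicot Require Import Coquelicot.
Open Scope R_scope.

Definition is_metric {X : Type} (d : X -> X -> R) : Prop :=
  (forall x y, 0 <= d x y) /\
  (forall x y, d x y = 0 <-> x = y) /\
  (forall x y, d x y = d y x) /\
  (forall x y z, d x z <= d x y + d y z).

(** [X] has diameter 1 (standing assumption of the paper). *)
Definition diameter_one {X : Type} (d : X -> X -> R) : Prop :=
  is_lub (fun r => exists x y, r = d x y) 1.

Definition mopen {X : Type} (d : X -> X -> R) (U : X -> Prop) : Prop :=
  forall x, U x -> exists eps, 0 < eps /\ forall y, d x y < eps -> U y.

Definition mcompact {X : Type} (d : X -> X -> R) (A : X -> Prop) : Prop :=
  forall (I : Type) (U : I -> X -> Prop),
    (forall i, mopen d (U i)) ->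
    (forall x, A x -> exists i, U i x) ->
    exists l : list I, forall x, A x -> exists i, In i l /\ U i x.

Definition compact_space {X : Type} (d : X -> X -> R) : Prop :=
  mcompact d (fun _ => True).

(** set-valued maps are represented as [F : X -> X -> Prop], [F x] being the
    set F(x).  F takes values in 2^X: nonempty compact subsets. *)
Definition values_in_2X {X : Type} (d : X -> X -> R) (F : X -> X -> Prop) : Prop :=
  forall x, (exists y, F x y) /\ mcompact d (F x).

Definition usc {X : Type} (d : X -> X -> R) (F : X -> X -> Prop) : Prop :=
  forall x (U : X -> Prop), mopen d U -> (forall y, F x y -> U y) ->
    exists eps, 0 < eps /\
      forall x', d x x' < eps -> forall y, F x' y -> U y.

Definition lsc {X : Type} (d : X -> X -> R) (F : X -> X -> Prop) : Prop :=
  forall x (U : X -> Prop), mopen d U -> (exists y, F x y /\ U y) ->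
    exists eps, 0 < eps /\
      forall x', d x x' < eps -> exists y, F x' y /\ U y.

Definition sv_continuous {X : Type} (d : X -> X -> R) (F : X -> X -> Prop) : Prop :=
  usc d F /\ lsc d F.

Definition sv_onto {X : Type} (F : X -> X -> Prop) : Prop :=
  forall y, exists x, F x y.

(** e(z, G(w)) < delta, i.e. inf_{a in G w} e z a < delta, unfolded. *)
Definition dist_set_lt {Z : Type} (e : Z -> Z -> R) (z : Z) (A : Z -> Prop)
  (delta : R) : Prop :=
  exists a, A a /\ e z a < delta.

Definition pseudo_orbit {Z : Type} (e : Z -> Z -> R) (G : Z -> Z -> Prop)
  (delta : R) (z : nat -> Z) : Prop :=
  forall n, dist_set_lt e (z (S n)) (G (z n)) delta.

Definition sv_orbit {Z : Type} (G : Z -> Z -> Prop) (w : nat -> Z) : Prop :=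
  forall n, G (w n) (w (S n)).

Definition shadowing {Z : Type} (e : Z -> Z -> R) (G : Z -> Z -> Prop) : Prop :=
  forall eps, 0 < eps -> exists delta, 0 < delta /\
    forall z : nat -> Z, pseudo_orbit e G delta z ->
      exists w : nat -> Z, sv_orbit G w /\ forall n, e (z n) (w n) < eps.

Definition Orb_inv {X : Type} (F : X -> X -> Prop) : Type :=
  { x : nat -> X | forall n, F (x (S n)) (x n) }.

Definition rho {X : Type} (d : X -> X -> R) (F : X -> X -> Prop)
  (x y : Orb_inv F) : R :=
  Series (fun n => d (proj1_sig x n) (proj1_sig y n) / 2 ^ (S n)).

Definition F_inv {X : Type} (F : X -> X -> Prop) (x w : Orb_inv F) : Prop :=
  F (proj1_sig x 0%nat) (proj1_sig w 0%nat) /\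
  forall n, proj1_sig w (S n) = proj1_sig x n.

From Stdlib Require Import Reals Lra Lia IndefiniteDescription List.
From Coquelicot Require Import Coquelicot.
Open Scope R_scope.

(* Since d <= 1, rho is governed by finitely many coordinates: d(x_j, y_j) <= 2^(j+1) rho(x, y),
   and rho(x, y) <= eta + 2^-(N+1) as soon as the coordinates up to N are eta-close.  As F is
   onto, a finite chain c_0 -> ... -> c_M can be read backwards as the point
   (c_M, ..., c_0, ...) of Orb_inv(X), completed by preimages.  If F shadows, the coordinates of
   a pseudo-orbit of F_inv, read along a diagonal, form a pseudo-orbit of F, and its shadowing
   orbit read backwards shadows in rho.  Conversely, compactness makes F uniformly lower
   semicontinuous, so a pseudo-orbit of F is tracked for N+1 steps by true chains; read
   backwards they form a pseudo-orbit of F_inv, whose shadowing orbit projects onto a shadowing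
   orbit of F. *)

Lemma pow2_gt0 n : 0 < 2 ^ n.
Proof. apply pow_lt; lra. Qed.

Lemma Series_nonneg (a : nat -> R) : (forall n, 0 <= a n) -> ex_series a -> 0 <= Series a.
Proof.
  intros a_ge0 a_sum.
  replace 0 with (Series (fun n => 0 * a n)).
  - apply Series_le; [intro n; specialize (a_ge0 n); lra | exact a_sum].
  - rewrite Series_scal_l; ring.
Qed.

Lemma is_series_inv_pow2_S : is_series (fun k => / 2 ^ S k) 1.
Proof.
  apply (is_series_ext (fun k => / 2 * (/ 2) ^ k)).
  { intro k; simpl; rewrite Rinv_mult, pow_inv; reflexivity. }
  pose proof (is_series_scal_l (/ 2) _ _
    (is_series_geom (/ 2) ltac:(rewrite Rabs_pos_eq; lra))) as geom.
  replace 1 with (/ 2 * / (1 - / 2)) by field. exact geom.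
Qed.

Lemma exists_inv_pow2_lt e : 0 < e -> exists N, / 2 ^ S N < e.
Proof.
  intro e_pos.
  destruct (pow_lt_1_zero (/ 2) ltac:(rewrite Rabs_pos_eq; lra) e e_pos) as [N HN].
  exists N. specialize (HN (S N) ltac:(lia)).
  rewrite Rabs_pos_eq, pow_inv in HN; [exact HN | apply pow_le; lra].
Qed.

Lemma sum_dyadic_const eta N : sum_f_R0 (fun j => eta / 2 ^ S j) N = eta * (1 - / 2 ^ S N).
Proof.
  induction N as [|N IH]; [simpl; field|].
  rewrite tech5, IH. change (2 ^ S (S N)) with (2 * 2 ^ S N).
  pose proof (pow2_gt0 (S N)). field. lra.
Qed.

Section DyadicSeries.
Variable a : nat -> R.
Hypothesis a_unit : forall n, 0 <= a n <= 1.

Lemma dyadic_term_bounds n : 0 <= a n / 2 ^ S n <= / 2 ^ S n.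
Proof.
  pose proof (pow2_gt0 (S n)). specialize (a_unit n).
  split; [apply Rdiv_le_0_compat | unfold Rdiv; rewrite <- (Rmult_1_l (/ 2 ^ S n)) at 2;
    apply Rmult_le_compat_r; [left; apply Rinv_0_lt_compat |]]; lra.
Qed.

Lemma ex_series_dyadic : ex_series (fun n => a n / 2 ^ S n).
Proof.
  apply (@ex_series_le R_AbsRing R_CompleteNormedModule _ (fun n => / 2 ^ S n)).
  - intro n. destruct (dyadic_term_bounds n).
    change (Rabs (a n / 2 ^ S n) <= / 2 ^ S n). rewrite Rabs_pos_eq; lra.
  - eexists; apply is_series_inv_pow2_S.
Qed.

Lemma dyadic_term_le_Series j : a j / 2 ^ S j <= Series (fun n => a n / 2 ^ S n).
Proof.
  rewrite (Series_incr_n (fun n => a n / 2 ^ S n) (S j)) by (lia || apply ex_series_dyadic).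
  simpl Init.Nat.pred.
  assert (partial : a j / 2 ^ S j <= sum_f_R0 (fun n => a n / 2 ^ S n) j).
  { destruct j as [|j]; [simpl; lra|]. rewrite tech5.
    pose proof (cond_pos_sum _ j (fun n => proj1 (dyadic_term_bounds n))). lra. }
  assert (tail : 0 <= Series (fun k => a (S j + k)%nat / 2 ^ S (S j + k))).
  { apply Series_nonneg; [intro; apply dyadic_term_bounds |].
    apply (ex_series_incr_n (fun n => a n / 2 ^ S n) (S j)), ex_series_dyadic. }
  lra.
Qed.

(* The first N+1 terms contribute at most eta, the tail at most 2^-(N+1). *)
Lemma Series_dyadic_le eta N : 0 <= eta -> (forall j, (j <= N)%nat -> a j <= eta) ->
  Series (fun n => a n / 2 ^ S n) <= eta + / 2 ^ S N.
Proof.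
  intros eta_ge0 a_le.
  rewrite (Series_incr_n (fun n => a n / 2 ^ S n) (S N)) by (lia || apply ex_series_dyadic).
  simpl Init.Nat.pred.
  pose proof (Rinv_0_lt_compat _ (pow2_gt0 (S N))).
  assert (head : sum_f_R0 (fun n => a n / 2 ^ S n) N <= eta).
  { apply Rle_trans with (sum_f_R0 (fun j => eta / 2 ^ S j) N).
    - apply sum_Rle. intros n n_le. apply Rmult_le_compat_r.
      + left; apply Rinv_0_lt_compat, pow2_gt0.
      + apply a_le; lia.
    - rewrite sum_dyadic_const. nra. }
  assert (tail : Series (fun k => a (S N + k)%nat / 2 ^ S (S N + k)) <= / 2 ^ S N).
  { apply Rle_trans with (Series (fun k => / 2 ^ S k * / 2 ^ S N)).
    - apply Series_le.
      + intro k. destruct (dyadic_term_bounds (S N + k)). split; [assumption|].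
        rewrite <- Rinv_mult, <- pow_add. replace (S k + S N)%nat with (S (S N + k)) by lia.
        assumption.
      + apply ex_series_scal_r. eexists; apply is_series_inv_pow2_S.
    - rewrite Series_scal_r, (is_series_unique _ _ is_series_inv_pow2_S). lra. }
  lra.
Qed.

End DyadicSeries.

Lemma list_common_radius {A : Type} (l : list A) (Q : A -> R -> Prop) :
  (forall a r r', Q a r -> 0 < r' <= r -> Q a r') ->
  (forall a, In a l -> exists r, 0 < r /\ Q a r) ->
  exists r, 0 < r /\ forall a, In a l -> Q a r.
Proof.
  intros Q_mono. induction l as [|b l IH]; intro radii.
  - exists 1. split; [lra | intros a []].
  - destruct (radii b (or_introl eq_refl)) as [rb [rb_pos Qb]].
    destruct IH as [r [r_pos Qr]]; [intros a Ha; apply radii; right; exact Ha|].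
    exists (Rmin rb r). pose proof (Rmin_pos _ _ rb_pos r_pos).
    split; [assumption|]. intros a [<-|Ha].
    + apply (Q_mono _ rb); [assumption | split; [assumption | apply Rmin_l]].
    + apply (Q_mono _ r); [auto | split; [assumption | apply Rmin_r]].
Qed.

Definition sv_chain {X : Type} (F : X -> X -> Prop) (c : nat -> X) (M : nat) : Prop :=
  forall t, (t < M)%nat -> F (c t) (c (S t)).

Lemma sv_chain_pred {X : Type} (F : X -> X -> Prop) c M :
  sv_chain F c (S M) -> sv_chain F c M.
Proof. intros c_chain t t_lt. apply c_chain. lia. Qed.

Lemma sv_orbit_chain {X : Type} (F : X -> X -> Prop) w M : sv_orbit F w -> sv_chain F w M.
Proof. intros w_orbit t _. apply w_orbit. Qed.

Lemma sv_chain_snoc {X : Type} (F : X -> X -> Prop) c M b :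
  sv_chain F c M -> F (c M) b ->
  sv_chain F (fun t => if (t <=? M)%nat then c t else b) (S M).
Proof.
  intros c_chain Fb t t_lt.
  destruct (Nat.lt_ge_cases t M) as [lt | ge].
  - rewrite (proj2 (Nat.leb_le t M)), (proj2 (Nat.leb_le (S t) M)) by lia. auto.
  - replace t with M by lia. rewrite Nat.leb_refl, (proj2 (Nat.leb_gt (S M) M)) by lia.
    exact Fb.
Qed.

Section MetricSpace.
Variables (X : Type) (d : X -> X -> R).
Hypothesis d_metric : is_metric d.

Lemma dist_ge0 x y : 0 <= d x y.
Proof. apply (proj1 d_metric). Qed.

Lemma dist_xx x : d x x = 0.
Proof. apply (proj1 (proj2 d_metric)). reflexivity. Qed.

Lemma dist_sym x y : d x y = d y x.
Proof. apply (proj1 (proj2 (proj2 d_metric))). Qed.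

Lemma dist_triangle x y z : d x z <= d x y + d y z.
Proof. apply (proj2 (proj2 (proj2 d_metric))). Qed.

Lemma mopen_union_balls {I : Type} (P : I -> Prop) (c : I -> X) r :
  mopen d (fun y => exists i, P i /\ d (c i) y < r).
Proof.
  intros y [i [Pi lt_r]]. exists (r - d (c i) y). split; [lra|].
  intros y' close. exists i. split; [exact Pi|].
  pose proof (dist_triangle (c i) y y'). lra.
Qed.

Lemma mopen_ball c r : mopen d (fun y => d c y < r).
Proof.
  intros y lt_r. destruct (mopen_union_balls (fun _ : unit => True) (fun _ => c) r y)
    as [e [e_pos He]]; [exists tt; auto|].
  exists e. split; [exact e_pos|]. intros y' close. destruct (He y' close) as [_ [_ H]]. exact H.
Qed.

Section ContinuousMap.
Variable F : X -> X -> Prop.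
Hypothesis F_compact_values : values_in_2X d F.
Hypothesis F_continuous : sv_continuous d F.

(* Cover the compact set F x by finitely many eta/2-balls: upper semicontinuity keeps
   F x1 inside their union, lower semicontinuity at each centre reaches into F x2. *)
Lemma local_uniform_lsc eta : 0 < eta -> forall x, exists r, 0 < r /\
  forall x1 x2, d x x1 < r -> d x x2 < r -> forall a, F x1 a ->
  exists a', F x2 a' /\ d a a' < eta.
Proof.
  intros eta_pos x. set (e := eta / 2).
  destruct (proj2 (F_compact_values x) {a | F x a} (fun i y => d (proj1_sig i) y < e))
    as [l cover].
  { intro i; apply mopen_ball. }
  { intros y Fy. exists (exist _ y Fy). simpl. rewrite dist_xx. unfold e; lra. }
  destruct (proj1 F_continuous x (fun y => exists i, In i l /\ d (proj1_sig i) y < e))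
    as [s [s_pos near_cover]].
  { apply mopen_union_balls. }
  { intros y Fy. destruct (cover y Fy) as [i [Il Hi]]. eauto. }
  destruct (list_common_radius l (fun i r => forall x', d x x' < r ->
              exists y, F x' y /\ d (proj1_sig i) y < e)) as [r [r_pos reach]].
  { intros i r r' Q [_ r'_le] x' close. apply Q. lra. }
  { intros [i Fi] _. simpl.
    destruct (proj2 F_continuous x (fun y => d i y < e)) as [q [q_pos Hq]].
    - apply mopen_ball.
    - exists i. split; [exact Fi | rewrite dist_xx; unfold e; lra].
    - exists q. auto. }
  exists (Rmin s r). split; [apply Rmin_pos; assumption|].
  intros x1 x2 close1 close2 a Fa.
  destruct (near_cover x1 (Rlt_le_trans _ _ _ close1 (Rmin_l _ _)) a Fa) as [i [Il Hi]].
  destruct (reach i Il x2 (Rlt_le_trans _ _ _ close2 (Rmin_r _ _))) as [y [Fy Hy]].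
  exists y. split; [exact Fy|].
  pose proof (dist_triangle a (proj1_sig i) y) as tri.
  rewrite (dist_sym a (proj1_sig i)) in tri. unfold e in *. lra.
Qed.

Hypothesis X_compact : compact_space d.

Lemma uniform_lsc eta : 0 < eta -> exists r, 0 < r /\
  forall x1 x2, d x1 x2 < r -> forall a, F x1 a ->
  exists a', F x2 a' /\ d a a' < eta.
Proof.
  intro eta_pos.
  destruct (functional_choice _ (local_uniform_lsc eta eta_pos)) as [T HT].
  destruct (X_compact X (fun x y => d x y < T x / 2)) as [l cover].
  { intro; apply mopen_ball. }
  { intros y _. exists y. rewrite dist_xx. pose proof (proj1 (HT y)). lra. }
  destruct (list_common_radius l (fun x r => r <= T x / 2)) as [r [r_pos r_le]].
  { intros; lra. }
  { intros x _. exists (T x / 2). pose proof (proj1 (HT x)). split; lra. }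
  exists r. split; [exact r_pos|]. intros x1 x2 close a Fa.
  destruct (cover x1 I) as [x [Il Hx]].
  specialize (r_le x Il). pose proof (dist_triangle x x1 x2).
  apply (proj2 (HT x) x1 x2); [lra | lra | exact Fa].
Qed.

Lemma pseudo_orbit_tracking L : forall th, 0 < th -> exists de, 0 < de /\
  forall y, pseudo_orbit d F de y -> forall s, exists c : nat -> X,
    c 0%nat = y s /\ sv_chain F c L /\
    forall t, (t <= L)%nat -> d (c t) (y (s + t)%nat) < th.
Proof.
  induction L as [|L IH]; intros th th_pos.
  - exists 1. split; [lra|]. intros y _ s. exists (fun _ => y s).
    split; [reflexivity|]. split; [intros t t_lt; lia|].
    intros t t_le. replace (s + t)%nat with s by lia. rewrite dist_xx. exact th_pos.
  - destruct (uniform_lsc (th / 2)) as [r [r_pos lsc_r]]; [lra|].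
    destruct (IH (Rmin th r)) as [de [de_pos track]]; [apply Rmin_pos; assumption|].
    pose proof (Rmin_l de (th / 2)). pose proof (Rmin_r de (th / 2)).
    pose proof (Rmin_l th r). pose proof (Rmin_r th r).
    exists (Rmin de (th / 2)). split; [apply Rmin_pos; lra|].
    intros y y_pseudo s.
    destruct (track y) with (s := s) as [c [c0 [c_chain c_close]]].
    { intro n. destruct (y_pseudo n) as [a [Fa Ha]]. exists a. split; [exact Fa | lra]. }
    destruct (y_pseudo (s + L)%nat) as [a [Fa Ha]].
    pose proof (c_close L (le_n _)) as cL_close.
    destruct (lsc_r (y (s + L)%nat) (c L)) with (a := a) as [b [Fb Hb]]; [|exact Fa|].
    { rewrite dist_sym. lra. }
    exists (fun t => if (t <=? L)%nat then c t else b).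
    split; [exact c0|]. split; [apply sv_chain_snoc; assumption|].
    intros t t_le. destruct (Nat.le_gt_cases t L) as [le | gt].
    + rewrite (proj2 (Nat.leb_le t L)) by exact le. pose proof (c_close t le). lra.
    + rewrite (proj2 (Nat.leb_gt t L)) by exact gt.
      replace (s + t)%nat with (S (s + L)) by lia.
      pose proof (dist_triangle b a (y (S (s + L)))) as tri.
      rewrite (dist_sym b a), (dist_sym a (y _)) in tri. lra.
Qed.

End ContinuousMap.
End MetricSpace.

Section ReadBackwards.
Variables (X : Type) (F : X -> X -> Prop) (pre : X -> X).
Hypothesis pre_spec : forall x, F (pre x) x.

Definition backward (p : X) (m : nat) : X := Nat.iter m pre p.

Lemma backward_inv p m : F (backward p (S m)) (backward p m).
Proof. apply pre_spec. Qed.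

Definition rev_chain (c : nat -> X) (M j : nat) : X :=
  if (j <=? M)%nat then c (M - j)%nat else backward (c 0%nat) (j - M).

Lemma rev_chain_le c M j : (j <= M)%nat -> rev_chain c M j = c (M - j)%nat.
Proof. intro le. unfold rev_chain. rewrite (proj2 (Nat.leb_le _ _) le). reflexivity. Qed.

Lemma rev_chain_gt c M j : (M < j)%nat -> rev_chain c M j = backward (c 0%nat) (j - M).
Proof. intro gt. unfold rev_chain. rewrite (proj2 (Nat.leb_gt _ _) gt). reflexivity. Qed.

Lemma rev_chain_0 c M : rev_chain c M 0 = c M.
Proof. rewrite rev_chain_le, Nat.sub_0_r by lia. reflexivity. Qed.

Lemma rev_chain_inv c M : sv_chain F c M -> forall j, F (rev_chain c M (S j)) (rev_chain c M j).
Proof.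
  intros c_chain j. destruct (Nat.lt_ge_cases j M) as [lt | ge].
  - rewrite !rev_chain_le by lia. replace (M - j)%nat with (S (M - S j)) by lia.
    apply c_chain. lia.
  - rewrite (rev_chain_gt c M (S j)) by lia. replace (S j - M)%nat with (S (j - M)) by lia.
    destruct (Nat.eq_dec j M) as [-> | ne].
    + rewrite rev_chain_le, Nat.sub_diag by lia. apply (backward_inv _ 0).
    + rewrite rev_chain_gt by lia. apply backward_inv.
Qed.

Definition rev_chain_point (c : nat -> X) (M : nat) (c_chain : sv_chain F c M) : Orb_inv F :=
  exist _ (rev_chain c M) (rev_chain_inv c M c_chain).

Lemma F_inv_rev_chain_point c M c_chain c_chain' :
  F_inv F (rev_chain_point c M c_chain) (rev_chain_point c (S M) c_chain').
Proof.
  split; [|reflexivity]. simpl. rewrite !rev_chain_0. apply c_chain'. lia.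
Qed.

Definition prepend_backward (x : nat -> X) (N t : nat) : X :=
  if (N <=? t)%nat then x (t - N)%nat else backward (x 0%nat) (N - t).

Lemma prepend_backward_ge x N t : (N <= t)%nat -> prepend_backward x N t = x (t - N)%nat.
Proof. intro le. unfold prepend_backward. rewrite (proj2 (Nat.leb_le _ _) le). reflexivity. Qed.

Lemma prepend_backward_lt x N t :
  (t < N)%nat -> prepend_backward x N t = backward (x 0%nat) (N - t).
Proof. intro lt. unfold prepend_backward. rewrite (proj2 (Nat.leb_gt _ _) lt). reflexivity. Qed.

Lemma prepend_backward_step x N t :
  (t < N)%nat -> F (prepend_backward x N t) (prepend_backward x N (S t)).
Proof.
  intro lt. rewrite prepend_backward_lt by exact lt.
  destruct (Nat.eq_dec (S t) N) as [eq | ne].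
  - rewrite prepend_backward_ge by lia.
    replace (S t - N)%nat with 0%nat by lia. replace (N - t)%nat with 1%nat by lia.
    apply (backward_inv _ 0).
  - rewrite prepend_backward_lt by lia. replace (N - t)%nat with (S (N - S t)) by lia.
    apply backward_inv.
Qed.

End ReadBackwards.

Section InverseLimitShadowing.
Variables (X : Type) (d : X -> X -> R) (F : X -> X -> Prop).
Hypothesis d_metric : is_metric d.
Hypothesis d_diam : diameter_one d.

Lemma dist_le1 x y : d x y <= 1.
Proof. apply (proj1 d_diam). exists x, y. reflexivity. Qed.

Lemma dist_unit x y : 0 <= d x y <= 1.
Proof. split; [apply (dist_ge0 _ _ d_metric) | apply dist_le1]. Qed.

Lemma coord_le_rho (z w : Orb_inv F) j :
  d (proj1_sig z j) (proj1_sig w j) / 2 ^ S j <= rho d F z w.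
Proof.
  apply (dyadic_term_le_Series (fun n => d (proj1_sig z n) (proj1_sig w n))).
  intro; apply dist_unit.
Qed.

Lemma rho_le_of_coords (z w : Orb_inv F) eta N : 0 <= eta ->
  (forall j, (j <= N)%nat -> d (proj1_sig z j) (proj1_sig w j) <= eta) ->
  rho d F z w <= eta + / 2 ^ S N.
Proof.
  apply (Series_dyadic_le (fun n => d (proj1_sig z n) (proj1_sig w n))).
  intro; apply dist_unit.
Qed.

Section PseudoOrbitCoordinates.
Variables (de : R) (z : nat -> Orb_inv F).
Hypothesis z_pseudo : pseudo_orbit (rho d F) (F_inv F) de z.

Lemma pseudo_orbit_F_inv_head k :
  dist_set_lt d (proj1_sig (z (S k)) 0%nat) (F (proj1_sig (z k) 0%nat)) (2 * de).
Proof.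
  destruct (z_pseudo k) as [a [[Fa _] close]].
  exists (proj1_sig a 0%nat). split; [exact Fa|].
  pose proof (coord_le_rho (z (S k)) a 0). simpl in *. lra.
Qed.

Lemma pseudo_orbit_F_inv_shift k j :
  d (proj1_sig (z (S k)) (S j)) (proj1_sig (z k) j) <= 2 ^ S (S j) * de.
Proof.
  destruct (z_pseudo k) as [a [[_ shift] close]].
  pose proof (coord_le_rho (z (S k)) a (S j)) as coord_le. rewrite shift in coord_le.
  pose proof (pow2_gt0 (S (S j))).
  set (D := d (proj1_sig (z (S k)) (S j)) (proj1_sig (z k) j)) in *.
  replace D with (D / 2 ^ S (S j) * 2 ^ S (S j)) by (field; lra). nra.
Qed.

End PseudoOrbitCoordinates.

Lemma diagonal_drift (u : nat -> nat -> X) de : 0 <= de ->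
  (forall k j, d (u (S k) (S j)) (u k j) <= 2 ^ S (S j) * de) ->
  forall j k, d (u k j) (u (k - j)%nat (j - k)%nat) <= 2 ^ S (S j) * de.
Proof.
  intros de_ge0 step. pose proof (pow2_gt0 (S (S O))).
  induction j as [|j IH]; intro k.
  - rewrite Nat.sub_0_r, Nat.sub_0_l, (dist_xx _ _ d_metric). nra.
  - pose proof (pow2_gt0 (S (S (S j)))).
    destruct k as [|k].
    + rewrite Nat.sub_0_l, Nat.sub_0_r, (dist_xx _ _ d_metric). nra.
    + simpl Nat.sub.
      pose proof (dist_triangle _ _ d_metric (u (S k) (S j)) (u k j) (u (k - j) (j - k))%nat).
      specialize (step k j). specialize (IH k).
      change (2 ^ S (S (S j))) with (2 * 2 ^ S (S j)). lra.
Qed.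

(* Follow the coordinates of z 0 down to its zeroth one, then the zeroth coordinates. *)
Lemma diagonal_pseudo_orbit (z : nat -> Orb_inv F) de N : 0 < de ->
  (forall k, dist_set_lt d (proj1_sig (z (S k)) 0%nat) (F (proj1_sig (z k) 0%nat)) de) ->
  pseudo_orbit d F de (fun i => proj1_sig (z (i - N)%nat) (N - i)%nat).
Proof.
  intros de_pos heads i. cbv beta.
  destruct (Nat.lt_ge_cases i N) as [lt | ge].
  - exists (proj1_sig (z (S i - N)%nat) (N - S i)%nat).
    split; [|rewrite (dist_xx _ _ d_metric); exact de_pos].
    replace (i - N)%nat with 0%nat by lia. replace (S i - N)%nat with 0%nat by lia.
    replace (N - i)%nat with (S (N - S i)) by lia. apply (proj2_sig (z 0%nat)).
  - replace (S i - N)%nat with (S (i - N)) by lia.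
    replace (N - i)%nat with 0%nat by lia. replace (N - S i)%nat with 0%nat by lia.
    apply heads.
Qed.

Variable pre : X -> X.
Hypothesis pre_spec : forall x, F (pre x) x.

Lemma pseudo_orbit_prepend_backward de x N : 0 < de ->
  pseudo_orbit d F de x -> pseudo_orbit d F de (prepend_backward X pre x N).
Proof.
  intros de_pos x_pseudo t. destruct (Nat.lt_ge_cases t N) as [lt | ge].
  - exists (prepend_backward X pre x N (S t)).
    split; [apply prepend_backward_step; assumption|].
    rewrite (dist_xx _ _ d_metric). exact de_pos.
  - rewrite !prepend_backward_ge by lia. replace (S t - N)%nat with (S (t - N)) by lia.
    apply x_pseudo.
Qed.

Theorem shadowing_F_inv_of_shadowing : shadowing d F -> shadowing (rho d F) (F_inv F).
Proof.
  intros F_shadow eps eps_pos.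
  destruct (exists_inv_pow2_lt (eps / 4)) as [N tail_small]; [lra|].
  destruct (F_shadow (eps / 4)) as [de1 [de1_pos shadow1]]; [lra|].
  set (K := 2 ^ S (S N)). assert (K_pos : 0 < K) by apply pow2_gt0.
  set (de := Rmin (de1 / 2) (eps / (4 * K))).
  assert (de_pos : 0 < de) by (apply Rmin_pos; [lra | apply Rdiv_lt_0_compat; lra]).
  assert (de_le : de <= de1 / 2) by apply Rmin_l.
  assert (Kde_le : K * de <= eps / 4).
  { apply Rle_trans with (K * (eps / (4 * K))); [apply Rmult_le_compat_l; [lra | apply Rmin_r]|].
    right. field. lra. }
  exists de. split; [exact de_pos|]. intros z z_pseudo.
  destruct (shadow1 (fun i => proj1_sig (z (i - N)%nat) (N - i)%nat)) as [w [w_orbit w_close]].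
  { apply diagonal_pseudo_orbit; [exact de1_pos|]. intro k.
    destruct (pseudo_orbit_F_inv_head de z z_pseudo k) as [a [Fa Ha]].
    exists a. split; [exact Fa | lra]. }
  pose proof (diagonal_drift (fun k j => proj1_sig (z k) j) de ltac:(lra)
                (pseudo_orbit_F_inv_shift de z z_pseudo)) as drift.
  exists (fun k => rev_chain_point X F pre pre_spec w (k + N) (sv_orbit_chain F w _ w_orbit)).
  split; [intro k; apply F_inv_rev_chain_point|].
  intro k. apply Rle_lt_trans with (K * de + eps / 4 + / 2 ^ S N); [|lra].
  apply rho_le_of_coords; [nra|].
  intros j j_le. simpl. rewrite rev_chain_le by lia.
  specialize (w_close (k + N - j)%nat). cbv beta in w_close.
  replace (k + N - j - N)%nat with (k - j)%nat in w_close by lia.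
  replace (N - (k + N - j))%nat with (j - k)%nat in w_close by lia.
  specialize (drift j k). cbv beta in drift.
  pose proof (dist_triangle _ _ d_metric (proj1_sig (z k) j)
                (proj1_sig (z (k - j)%nat) (j - k)%nat) (w (k + N - j)%nat)).
  assert (2 ^ S (S j) <= K) by (apply Rle_pow; [lra | lia]).
  nra.
Qed.

Lemma rev_chains_pseudo_orbit (y : nat -> X) (C : nat -> nat -> X) N th de
  (C_chain : forall k, sv_chain F (C k) (S N)) :
  2 * th + / 2 ^ S N < de ->
  (forall k t, (t <= S N)%nat -> d (C k t) (y (k + t)%nat) < th) ->
  pseudo_orbit (rho d F) (F_inv F) de
    (fun k => rev_chain_point X F pre pre_spec (C k) N (sv_chain_pred F (C k) N (C_chain k))).
Proof.
  intros de_gt C_close k.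
  exists (rev_chain_point X F pre pre_spec (C k) (S N) (C_chain k)).
  split; [apply F_inv_rev_chain_point|].
  pose proof (C_close 0%nat 0%nat (Nat.le_0_l _)) as th_pos.
  pose proof (dist_ge0 _ _ d_metric (C 0%nat 0%nat) (y (0 + 0)%nat)).
  apply Rle_lt_trans with (2 * th + / 2 ^ S N); [|exact de_gt].
  apply rho_le_of_coords; [lra|].
  intros j j_le. simpl. rewrite !rev_chain_le by lia.
  pose proof (C_close (S k) (N - j)%nat ltac:(lia)) as close1.
  pose proof (C_close k (S N - j)%nat ltac:(lia)) as close2.
  replace (k + (S N - j))%nat with (S k + (N - j))%nat in close2 by lia.
  pose proof (dist_triangle _ _ d_metric (C (S k) (N - j)%nat) (y (S k + (N - j))%nat)
                (C k (S N - j)%nat)) as tri.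
  rewrite (dist_sym _ _ d_metric (y _)) in tri. lra.
Qed.

Hypothesis X_compact : compact_space d.
Hypothesis F_compact_values : values_in_2X d F.
Hypothesis F_continuous : sv_continuous d F.

Theorem shadowing_of_shadowing_F_inv : shadowing (rho d F) (F_inv F) -> shadowing d F.
Proof.
  intros inv_shadow eps eps_pos.
  destruct (inv_shadow (eps / 4)) as [dI [dI_pos shadowI]]; [lra|].
  destruct (exists_inv_pow2_lt (dI / 2)) as [N tail_small]; [lra|].
  set (th := Rmin (dI / 4) (eps / 2)).
  assert (th_pos : 0 < th) by (apply Rmin_pos; lra).
  assert (th_le1 : th <= dI / 4) by apply Rmin_l.
  assert (th_le2 : th <= eps / 2) by apply Rmin_r.
  destruct (pseudo_orbit_tracking X d d_metric F F_compact_values F_continuous X_compact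
              (S N) th th_pos) as [de [de_pos track]].
  exists de. split; [exact de_pos|]. intros x x_pseudo.
  set (y := prepend_backward X pre x N).
  destruct (functional_choice _ (track y (pseudo_orbit_prepend_backward de x N de_pos x_pseudo)))
    as [C HC].
  assert (C_chain : forall k, sv_chain F (C k) (S N)) by (intro k; apply (HC k)).
  destruct (shadowI _ (rev_chains_pseudo_orbit y C N th dI C_chain ltac:(lra)
                         (fun k => proj2 (proj2 (HC k))))) as [W [W_orbit W_close]].
  exists (fun k => proj1_sig (W k) 0%nat). split; [intro k; apply (W_orbit k)|].
  intro k. specialize (W_close k).
  match type of W_close with rho d F ?z _ < _ => pose proof (coord_le_rho z (W k) 0) as head end.
  simpl in head. rewrite rev_chain_0 in head.
  pose proof (proj2 (proj2 (HC k)) N ltac:(lia)) as CN_close.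
  unfold y in CN_close. rewrite prepend_backward_ge, Nat.add_sub in CN_close by lia.
  pose proof (dist_triangle _ _ d_metric (x k) (C k N) (proj1_sig (W k) 0%nat)) as tri.
  rewrite (dist_sym _ _ d_metric (x k) (C k N)) in tri. lra.
Qed.

End InverseLimitShadowing.

Theorem mainTheorem12 (X : Type) (d : X -> X -> R) (F : X -> X -> Prop) :
  is_metric d -> diameter_one d -> compact_space d ->
  values_in_2X d F -> sv_continuous d F -> sv_onto F ->
  (shadowing d F <-> shadowing (rho d F) (F_inv F)).
Proof.
  intros d_metric d_diam X_compact F_compact_values F_continuous F_onto.
  destruct (functional_choice (fun y x => F x y) F_onto) as [pre pre_spec].
  split.
  - exact (shadowing_F_inv_of_shadowing X d F d_metric d_diam pre pre_spec).
  - exact (shadowing_of_shadowing_F_inv X d F d_metric d_diam pre pre_spec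
             X_compact F_compact_values F_continuous).
Qed.
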